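(* Consider the random-subspace algorithm described in the context, and suppose that (i) the model Hessians are uniformly bounded, $\|\hat{H}_k\|\leq \kappa_H$ for all $k$, for some $\kappa_H\geq 1$; and (ii) at every iteration the computed step satisfies $$\hat{m}_k(\mathbf{0}) - \hat{m}_k(\hat{\mathbf{s}}_k) \geq \kappa_s \max\left(\|\hat{\mathbf{g}}_k\| \min\left(\Delta_k, \frac{\|\hat{\mathbf{g}}_k\|}{\max(\|\hat{H}_k\|,1)}\right), \hat{\tau}^m_k\Delta_k^2\right)$$ for some $\kappa_s>0$ independent of $k$. If at some iteration $k$ $$\Delta_k \leq c_0\, \hat{\sigma}^m_k, \qquad \text{where} \qquad c_0 := \min\left(\frac{1}{\mu}, \frac{1}{\kappa_H}, \frac{\kappa_s (1-\eta)}{\kappa_{\mathrm{ef}} \Delta_{\max}}, \frac{\kappa_s (1-\eta)}{\kappa_{\mathrm{ef}}}\right),$$ then iteration $k$ is successful, i.e. $R_k\geq \eta$ and $\hat{\sigma}^m_k\geq \mu\Delta_k$.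
   Context: Let $f:\mathbb{R}^n\to\mathbb{R}$. Fix $\mathbf{x}_0\in\mathbb{R}^n$, a subspace dimension $p\in\{1,\ldots,n\}$, radii $0<\Delta_0\leq\Delta_{\max}$, and parameters $0<\gamma_{\mathrm{dec}}<1<\gamma_{\mathrm{inc}}$, $\eta\in(0,1)$, $\mu>0$. For $k=0,1,2,\ldots$ the algorithm: (1) selects a random matrix $P_k\in\mathbb{R}^{n\times p}$; (2) builds a model $\hat{m}_k(\hat{\mathbf{s}}) = f(\mathbf{x}_k)+\hat{\mathbf{g}}_k^T\hat{\mathbf{s}}+\frac12\hat{\mathbf{s}}^T\hat{H}_k\hat{\mathbf{s}}$ ($\hat{\mathbf{g}}_k\in\mathbb{R}^p$, $\hat H_k\in\mathbb{R}^{p\times p}$ symmetric) that is $P_k$-fully quadratic, meaning there are constants $\kappa_{\mathrm{ef}},\kappa_{\mathrm{eg}},\kappa_{\mathrm{eh}}>0$ independent of $k$ with $|f(\mathbf{x}_k+P_k\hat{\mathbf{s}})-\hat m_k(\hat{\mathbf{s}})|\leq\kappa_{\mathrm{ef}}\Delta_k^3$, $\|P_k^T\nabla f(\mathbf{x}_k+P_k\hat{\mathbf{s}})-\nabla\hat m_k(\hat{\mathbf{s}})\|\leq\kappa_{\mathrm{eg}}\Delta_k^2$, $\|P_k^T\nabla^2 f(\mathbf{x}_k+P_k\hat{\mathbf{s}})P_k-\nabla^2\hat m_k(\hat{\mathbf{s}})\|\leq\kappa_{\mathrm{eh}}\Delta_k$ for all $\|\hat{\mathbf{s}}\|\leq\Delta_k$;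 (3) computes a step $\hat{\mathbf{s}}_k\in\mathbb{R}^p$ with $\|\hat{\mathbf{s}}_k\|\leq\Delta_k$ (approximately minimizing $\hat m_k$ on this ball); (4) computes $R_k := \frac{f(\mathbf{x}_k)-f(\mathbf{x}_k+P_k\hat{\mathbf{s}}_k)}{\hat m_k(\mathbf{0})-\hat m_k(\hat{\mathbf{s}}_k)}$; (5) with $\hat\tau^m_k:=\max(-\lambda_{\min}(\hat H_k),0)$ and $\hat\sigma^m_k:=\max(\|\hat{\mathbf{g}}_k\|,\hat\tau^m_k)$, iteration $k$ is successful if $R_k\geq\eta$ and $\hat\sigma^m_k\geq\mu\Delta_k$, in which case $\mathbf{x}_{k+1}=\mathbf{x}_k+P_k\hat{\mathbf{s}}_k$ and $\Delta_{k+1}=\min(\gamma_{\mathrm{inc}}\Delta_k,\Delta_{\max})$; otherwise it is unsuccessful, $\mathbf{x}_{k+1}=\mathbf{x}_k$ and $\Delta_{k+1}=\gamma_{\mathrm{dec}}\Delta_k$. Norms are Euclidean / operator 2-norms. *)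

From mathcomp Require Import all_boot all_algebra all_classical all_reals all_analysis.
Import numFieldNormedType.Exports.
Import GRing.Theory Num.Theory.
Set Implicit Arguments. Unset Strict Implicit. Unset Printing Implicit Defensive.
Local Open Scope ring_scope.
Local Open Scope classical_set_scope.

Section Defs.
Variable R : realType.

Definition enorm (m : nat) (v : 'cV[R]_m) : R := Num.sqrt (\sum_i (v i 0) ^+ 2).

Definition opnorm (m k : nat) (A : 'M[R]_(m, k)) : R :=
  sup [set enorm (A *m v) | v in [set v : 'cV[R]_k | enorm v <= 1]].

Definition lambda_min (p : nat) (A : 'M[R]_p) : R := inf [set a : R | eigenvalue A a].

Definition qmodel (p : nat) (fx : R) (g : 'cV[R]_p) (H : 'M[R]_p) (s : 'cV[R]_p) : R :=
  fx + (g^T *m s) 0 0 + 2^-1 * (s^T *m H *m s) 0 0.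

Definition tau_m (p : nat) (H : 'M[R]_p) : R := Num.max (- lambda_min H) 0.
Definition sigma_m (p : nat) (g : 'cV[R]_p) (H : 'M[R]_p) : R :=
  Num.max (enorm g) (tau_m H).

Definition ratio (n p : nat) (f : 'cV[R]_n -> R) (x : 'cV[R]_n) (P : 'M[R]_(n, p))
  (g : 'cV[R]_p) (H : 'M[R]_p) (s : 'cV[R]_p) : R :=
  (f x - f (x + P *m s)) / (qmodel (f x) g H 0 - qmodel (f x) g H s).

Definition successful (n p : nat) (f : 'cV[R]_n -> R) (eta mu : R) (x : 'cV[R]_n)
  (P : 'M[R]_(n, p)) (g : 'cV[R]_p) (H : 'M[R]_p) (s : 'cV[R]_p) (Delta : R) : Prop :=
  eta <= ratio f x P g H s /\ mu * Delta <= sigma_m g H.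

End Defs.

From Pilot Require Import Defs.
From mathcomp Require Import all_boot all_order all_algebra all_classical all_reals all_analysis.
From mathcomp Require Import ring lra.
Import numFieldNormedType.Exports.
Import Order.TTheory GRing.Theory Num.Theory.

Set Implicit Arguments.
Unset Strict Implicit.
Unset Printing Implicit Defensive.
Local Open Scope ring_scope.

(* With sigma := max(||g||, tau) and D := m(0) - m(s) the predicted decrease,
   Delta <= c0 sigma gives mu Delta <= sigma directly.  The update rules keep
   Delta <= Deltamax, and the model error at the step, at most kef Delta^3, is
   at most (1 - eta) D: if sigma = ||g||, then Delta <= ||g|| / kH makes the
   Cauchy term ks ||g|| Delta, which is >= kef Deltamax Delta^2 / (1 - eta);
   if sigma = tau, the curvature term ks tau Delta^2 is >= kef Delta^3 / (1 - eta).
   Hence R_k = 1 - error / D >= eta.  Only the function-value part of full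
   quadraticity is needed. *)

Section TrustRegionRadius.
Variables (R : realFieldType) (Deltamax gdec ginc : R) (Delta : nat -> R).
Hypotheses (Delta0_gt0 : 0 < Delta 0%N) (Delta0_le : Delta 0%N <= Deltamax).
Hypotheses (gdec_gt0 : 0 < gdec) (gdec_lt1 : gdec < 1) (ginc_gt0 : 0 < ginc).
Hypothesis DeltaS : forall k,
  Delta k.+1 = Num.min (ginc * Delta k) Deltamax \/ Delta k.+1 = gdec * Delta k.

Lemma trust_radius_in_range k : 0 < Delta k <= Deltamax.
Proof.
elim: k => [|k /andP[Dk_gt0 Dk_le]]; first by rewrite Delta0_gt0.
have ginc_Dk_gt0 : 0 < ginc * Delta k by rewrite mulr_gt0.
have gdec_Dk_le : gdec * Delta k <= Delta k by rewrite ler_piMl ?ltW.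
case: (DeltaS k) => ->; apply/andP; split.
- by rewrite lt_min ginc_Dk_gt0; lra.
- by rewrite ge_min lexx orbT.
- by rewrite mulr_gt0.
- exact: le_trans gdec_Dk_le Dk_le.
Qed.

End TrustRegionRadius.

Lemma mulr_le_of_le_mul (R : numFieldType) (a b c sigma Delta : R) :
  0 < a -> 0 <= sigma -> b <= c / a -> Delta <= b * sigma -> a * Delta <= c * sigma.
Proof.
move=> a_gt0 sigma_ge0 b_le Delta_le.
rewrite -ler_pdivlMl // mulrA [a^-1 * c]mulrC.
by apply: le_trans Delta_le _; rewrite ler_wpM2r.
Qed.

Lemma radius_le_c0_bounds (R : realFieldType) (mu kH ks kef eta Deltamax Delta sigma : R) :
  0 < mu -> 0 < kH -> 0 < kef -> 0 < Deltamax -> 0 <= sigma ->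
  Delta <= Num.min (Num.min (mu^-1) (kH^-1))
             (Num.min (ks * (1 - eta) / (kef * Deltamax)) (ks * (1 - eta) / kef)) * sigma ->
  [/\ mu * Delta <= sigma, kH * Delta <= sigma,
      kef * Deltamax * Delta <= ks * (1 - eta) * sigma
    & kef * Delta <= ks * (1 - eta) * sigma].
Proof.
move=> mu_gt0 kH_gt0 kef_gt0 Dmax_gt0 sigma_ge0; set c0 := Num.min _ _ => Delta_le.
have bound a c : 0 < a -> c0 <= c / a -> a * Delta <= c * sigma.
  by move=> a_gt0 c0_le; apply: mulr_le_of_le_mul Delta_le.
rewrite -[X in mu * _ <= X]mul1r -[X in kH * _ <= X]mul1r.
have kefDmax_gt0 : 0 < kef * Deltamax by rewrite mulr_gt0.
by split; apply: bound; rewrite // ?div1r /c0 !ge_min lexx ?orbT.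
Qed.

Section DecreaseDominatesError.
Variables (R : realFieldType) (kH ks kef eta Deltamax Delta Hnorm gnorm tau : R).
Hypotheses (Delta_gt0 : 0 < Delta) (Delta_le : Delta <= Deltamax).
Hypotheses (kH_ge1 : 1 <= kH) (Hnorm_le : Hnorm <= kH).
Hypotheses (ks_gt0 : 0 < ks) (kef_gt0 : 0 < kef) (eta_lt1 : eta < 1).

Lemma cauchy_radius_minl : kH * Delta <= gnorm ->
  Num.min Delta (gnorm / Num.max Hnorm 1) = Delta.
Proof.
move=> kH_Delta_le; rewrite min_l // ler_pdivlMr ?lt_max ?ltr01 ?orbT //.
rewrite mulrC; apply: le_trans kH_Delta_le.
by rewrite ler_wpM2r ?(ltW Delta_gt0) // ge_max Hnorm_le.
Qed.

Lemma cubic_error_le_cauchy_decrease :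
  kef * Deltamax * Delta <= ks * (1 - eta) * gnorm ->
  kef * Delta ^+ 3 <= (1 - eta) * (ks * (gnorm * Delta)).
Proof.
move=> kef_Delta_le.
have Delta2_le : kef * Delta ^+ 2 <= kef * Deltamax * Delta.
  rewrite expr2 mulrA; apply: ler_wpM2r; first exact: ltW.
  by apply: ler_wpM2l; first exact: ltW.
have -> : (1 - eta) * (ks * (gnorm * Delta)) = ks * (1 - eta) * gnorm * Delta by ring.
rewrite exprSr mulrA; apply: ler_wpM2r; first exact: ltW.
exact: le_trans Delta2_le kef_Delta_le.
Qed.

Lemma cubic_error_le_curvature_decrease :
  kef * Delta <= ks * (1 - eta) * tau ->
  kef * Delta ^+ 3 <= (1 - eta) * (ks * (tau * Delta ^+ 2)).
Proof.
move=> kef_Delta_le.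
have -> : kef * Delta ^+ 3 = Delta ^+ 2 * (kef * Delta) by ring.
have -> : (1 - eta) * (ks * (tau * Delta ^+ 2)) = Delta ^+ 2 * (ks * (1 - eta) * tau)
  by ring.
by rewrite ler_wpM2l ?sqr_ge0.
Qed.

Lemma sufficient_decrease_dominates_error (D : R) :
  0 <= gnorm -> 0 <= tau ->
  kH * Delta <= Num.max gnorm tau ->
  kef * Deltamax * Delta <= ks * (1 - eta) * Num.max gnorm tau ->
  kef * Delta <= ks * (1 - eta) * Num.max gnorm tau ->
  ks * Num.max (gnorm * Num.min Delta (gnorm / Num.max Hnorm 1)) (tau * Delta ^+ 2) <= D ->
  0 < D /\ kef * Delta ^+ 3 <= (1 - eta) * D.
Proof.
move=> gnorm_ge0 tau_ge0 kH_le kefDmax_le kef_le D_ge.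
suff [L [L_gt0 L_le_D err_le]] :
    exists L, [/\ 0 < L, L <= D & kef * Delta ^+ 3 <= (1 - eta) * L].
  split; first exact: lt_le_trans L_gt0 L_le_D.
  by apply: le_trans err_le _; rewrite ler_wpM2l // subr_ge0 ltW.
have kH_gt0 : 0 < kH by apply: lt_le_trans ltr01 kH_ge1.
have [tau_le|gnorm_lt] := leP tau gnorm.
- rewrite (max_l tau_le) in kH_le kefDmax_le.
  have gnorm_gt0 : 0 < gnorm by apply: lt_le_trans kH_le; rewrite mulr_gt0.
  exists (ks * (gnorm * Delta)); split.
  + by rewrite !mulr_gt0.
  + apply: le_trans (ler_wpM2l (ltW ks_gt0) _) D_ge.
    by rewrite cauchy_radius_minl // le_max lexx.
  + exact: cubic_error_le_cauchy_decrease.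
- rewrite (max_r (ltW gnorm_lt)) in kef_le.
  exists (ks * (tau * Delta ^+ 2)); split.
  + by rewrite !mulr_gt0 ?exprn_gt0 // (le_lt_trans gnorm_ge0 gnorm_lt).
  + apply: le_trans (ler_wpM2l (ltW ks_gt0) _) D_ge.
    by rewrite le_max lexx orbT.
  + exact: cubic_error_le_curvature_decrease.
Qed.

End DecreaseDominatesError.

Section ModelFacts.
Variable R : realType.

Lemma enorm_ge0 m (v : 'cV[R]_m) : 0 <= enorm v.
Proof. exact: sqrtr_ge0. Qed.

Lemma tau_m_ge0 p (H : 'M[R]_p) : 0 <= tau_m H.
Proof. by rewrite /tau_m le_max lexx orbT. Qed.

Lemma qmodel0 p fx (g : 'cV[R]_p) (H : 'M[R]_p) : qmodel fx g H 0 = fx.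
Proof. by rewrite /qmodel !mulmx0 !mxE mulr0 !addr0. Qed.

Lemma ratio_ge_of_error_le n p (f : 'cV[R]_n -> R) x (P : 'M[R]_(n, p)) g H s eta :
  0 < qmodel (f x) g H 0 - qmodel (f x) g H s ->
  f (x + P *m s) - qmodel (f x) g H s
    <= (1 - eta) * (qmodel (f x) g H 0 - qmodel (f x) g H s) ->
  eta <= Defs.ratio f x P g H s.
Proof. by rewrite /Defs.ratio qmodel0 => D_gt0 err_le; rewrite ler_pdivlMr //; lra. Qed.

End ModelFacts.

Theorem lemma3p5 (R : realType) (n p : nat) (hp : (0 < p)%N) (hpn : (p <= n)%N)
  (f : 'cV[R]_n -> R) (gradf : 'cV[R]_n -> 'cV[R]_n) (hessf : 'cV[R]_n -> 'M[R]_n)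
  (x0 : 'cV[R]_n) (Delta0 Deltamax gdec ginc eta mu kef keg keh kH ks : R)
  (x : nat -> 'cV[R]_n) (P : nat -> 'M[R]_(n, p)) (g : nat -> 'cV[R]_p)
  (H : nat -> 'M[R]_p) (s : nat -> 'cV[R]_p) (Delta : nat -> R) :
  (* f is twice differentiable with gradient gradf and Hessian hessf *)
  (forall y v : 'cV[R]_n, is_derive y v f (((gradf y)^T *m v) 0 0)) ->
  (forall y v : 'cV[R]_n, is_derive y v gradf (hessf y *m v)) ->
  (* parameters *)
  0 < Delta0 -> Delta0 <= Deltamax ->
  0 < gdec -> gdec < 1 -> 1 < ginc -> 0 < eta -> eta < 1 -> 0 < mu ->
  0 < kef -> 0 < keg -> 0 < keh ->
  (* initialisation *)
  x 0%N = x0 -> Delta 0%N = Delta0 ->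
  (* models are P_k-fully quadratic *)
  (forall k, (H k)^T = H k) ->
  (forall k (sh : 'cV[R]_p), enorm sh <= Delta k ->
     `|f (x k + P k *m sh) - qmodel (f (x k)) (g k) (H k) sh| <= kef * Delta k ^+ 3
  /\ enorm ((P k)^T *m gradf (x k + P k *m sh) - (g k + H k *m sh)) <= keg * Delta k ^+ 2
  /\ opnorm ((P k)^T *m hessf (x k + P k *m sh) *m P k - H k) <= keh * Delta k) ->
  (* steps stay in the trust region *)
  (forall k, enorm (s k) <= Delta k) ->
  (* update rules *)
  (forall k, successful f eta mu (x k) (P k) (g k) (H k) (s k) (Delta k) ->
     x k.+1 = x k + P k *m s k /\ Delta k.+1 = Num.min (ginc * Delta k) Deltamax) ->
  (forall k, ~ successful f eta mu (x k) (P k) (g k) (H k) (s k) (Delta k) ->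
     x k.+1 = x k /\ Delta k.+1 = gdec * Delta k) ->
  (* (i) bounded model Hessians *)
  1 <= kH -> (forall k, opnorm (H k) <= kH) ->
  (* (ii) sufficient decrease *)
  0 < ks ->
  (forall k,
     qmodel (f (x k)) (g k) (H k) 0 - qmodel (f (x k)) (g k) (H k) (s k) >=
     ks * Num.max (enorm (g k) * Num.min (Delta k) (enorm (g k) / Num.max (opnorm (H k)) 1))
                  (tau_m (H k) * Delta k ^+ 2)) ->
  forall k,
    Delta k <= Num.min (Num.min (mu^-1) (kH^-1))
                       (Num.min (ks * (1 - eta) / (kef * Deltamax)) (ks * (1 - eta) / kef))
               * sigma_m (g k) (H k) ->
    successful f eta mu (x k) (P k) (g k) (H k) (s k) (Delta k).
Proof.
move=> _ _ D0_gt0 D0_le gdec_gt0 gdec_lt1 ginc_gt1 _ eta_lt1 mu_gt0 kef_gt0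
  _ _ _ Delta0E _ fully_quad step_in_region succ_update fail_update kH_ge1 H_bounded
  ks_gt0 decrease k Delta_le.
have ginc_gt0 : 0 < ginc by apply: lt_trans ltr01 ginc_gt1.
have DeltaS j : Delta j.+1 = Num.min (ginc * Delta j) Deltamax \/ Delta j.+1 = gdec * Delta j.
  case: (boolp.pselect (successful f eta mu (x j) (P j) (g j) (H j) (s j) (Delta j))).
    by move=> /succ_update[_ ->]; left.
  by move=> /fail_update[_ ->]; right.
rewrite -Delta0E in D0_gt0 D0_le.
have /andP[Dk_gt0 Dk_le] :=
  trust_radius_in_range D0_gt0 D0_le gdec_gt0 gdec_lt1 ginc_gt0 DeltaS k.
have sigma_ge0 : 0 <= sigma_m (g k) (H k) by rewrite le_max enorm_ge0.
have kH_gt0 : 0 < kH by apply: lt_le_trans ltr01 kH_ge1.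
have Dmax_gt0 : 0 < Deltamax by apply: lt_le_trans Dk_le.
have [mu_le kH_le kefDmax_le kef_le] :=
  radius_le_c0_bounds mu_gt0 kH_gt0 kef_gt0 Dmax_gt0 sigma_ge0 Delta_le.
have [err_le _] := fully_quad k (s k) (step_in_region k).
have [D_gt0 D_ge_err] := sufficient_decrease_dominates_error Dk_gt0 Dk_le kH_ge1
  (H_bounded k) ks_gt0 kef_gt0 eta_lt1 (enorm_ge0 (g k)) (tau_m_ge0 (H k))
  kH_le kefDmax_le kef_le (decrease k).
split=> //.
exact: ratio_ge_of_error_le D_gt0 (le_trans (ler_norm _) (le_trans err_le D_ge_err)).
Qed.
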